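(* Let $G$ be a finite connected bipartite graph with bipartition $(X,Y)$ such that for each $k\le\Delta(G)$ every $k$-element subset of $X$ and every $k$-element subset of $Y$ has a common neighbour. Then $G$ is $\mathcal{C}$-$\mathrm{HH}$.
   Context: $\Delta(G)$ is the maximum degree of $G$. A common neighbour of a vertex set $S$ is a vertex adjacent to every vertex of $S$. Subgraphs are induced; a homomorphism maps edges to edges. A graph $G$ is $\mathcal{C}$-$\mathrm{HH}$ if every homomorphism from a finite connected induced subgraph of $G$ into $G$ extends to a homomorphism $G\to G$. *)

From mathcomp Require Import all_boot.
Set Implicit Arguments. Unset Strict Implicit. Unset Printing Implicit Defensive.

Definition simple_graph (T : finType) (e : rel T) : Prop :=
  symmetric e /\ irreflexive e.

Definition nbhd (T : finType) (e : rel T) (v : T) : {set T} := [set u | e v u].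
Definition max_degree (T : finType) (e : rel T) : nat :=
  \max_(v : T) #|nbhd e v|.

Definition induced_rel (T : finType) (e : rel T) (S : {set T}) : rel T :=
  [rel x y | [&& x \in S, y \in S & e x y]].

Definition connected_on (T : finType) (e : rel T) (S : {set T}) : Prop :=
  S != set0 /\ forall x y, x \in S -> y \in S -> connect (induced_rel e S) x y.

Definition connected_graph (T : finType) (e : rel T) : Prop :=
  connected_on e [set: T].

Definition bipartition (T : finType) (e : rel T) (X Y : {set T}) : Prop :=
  [/\ X :&: Y = set0, X :|: Y = [set: T] &
      forall x y, e x y -> (x \in X /\ y \in Y) \/ (x \in Y /\ y \in X)].

Definition common_nbr (T : finType) (e : rel T) (A : {set T}) (v : T) : Prop :=
  forall a, a \in A -> e a v.

Definition hom_on (T : finType) (e : rel T) (S : {set T}) (f : T -> T) : Prop :=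
  forall x y, x \in S -> y \in S -> e x y -> e (f x) (f y).

Definition endo_hom (T : finType) (e : rel T) (g : T -> T) : Prop :=
  forall x y, e x y -> e (g x) (g y).

Definition C_HH (T : finType) (e : rel T) : Prop :=
  forall (S : {set T}) (f : T -> T), connected_on e S -> hom_on e S f ->
    exists g : T -> T, endo_hom e g /\ (forall x, x \in S -> g x = f x).

From mathcomp Require Import all_boot.

Set Implicit Arguments.
Unset Strict Implicit.
Unset Printing Implicit Defensive.

(* A homomorphism f from a connected induced subgraph G[S] maps edges to
   edges, hence either keeps every vertex of S on its side of the
   bipartition or moves every vertex of S to the other side.  Extend f
   first to all of X and then to all of Y, sending each new vertex z to a
   common neighbour of the images of the already mapped neighbours of z.
   Those images number at most Delta(G) and all lie on one side, so the
   hypothesis supplies the common neighbour; since X and Y are independent,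
   no further edge has to be checked.  If G has no edge, f itself extends. *)

Section Bipartite.
Variables (T : finType) (e : rel T) (X Y : {set T}).
Hypotheses (e_sym : symmetric e) (bip : bipartition e X Y).

Lemma bipartition_memY z : (z \in Y) = (z \notin X).
Proof.
case: bip => disXY covXY _.
have : z \in X :|: Y by rewrite covXY inE.
have : z \notin X :&: Y by rewrite disXY inE.
by rewrite !inE; case: (z \in X); case: (z \in Y).
Qed.

Lemma bipartition_edge {x y} : e x y -> (y \in X) = (x \notin X).
Proof.
case: bip => _ _ crossXY /crossXY [[xX yY] | [xY yX]].
- by move: yY; rewrite bipartition_memY xX => /negbTE.
- by move: xY; rewrite bipartition_memY yX => /negbTE ->.
Qed.

Definition side_parity (D : {set T}) (h : T -> T) (c : bool) : Prop :=
  {in D, forall s, (h s \in X) = ((s \in X) == c)}.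

Lemma connected_hom_side_parity S f :
  connected_on e S -> hom_on e S f -> exists c, side_parity S f c.
Proof.
move=> [/set0Pn [s0 s0S] connS] homf.
exists ((f s0 \in X) == (s0 \in X)) => s sS.
have closedP : closed (induced_rel e S) [pred s | (f s \in X) == (s \in X)].
  move=> x y /and3P [xS yS exy]; rewrite !inE.
  rewrite (bipartition_edge exy) (bipartition_edge (homf _ _ xS yS exy)).
  by case: (f x \in X); case: (x \in X).
have := closed_connect closedP (connS _ _ s0S sS); rewrite !inE => ->.
by case: (f s \in X); case: (s \in X).
Qed.

Section Extension.
Hypothesis common_nbr_small :
  forall A : {set T}, #|A| <= max_degree e ->
    (A \subset X -> exists v, common_nbr e A v) /\
    (A \subset Y -> exists v, common_nbr e A v).
Hypothesis has_edge : exists x y, e x y.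

Lemma exists_on_side b : exists w, (w \in X) = b.
Proof.
have [x [y exy]] := has_edge.
have [xb | xb] := eqVneq (x \in X) b; first by exists x.
by exists y; rewrite (bipartition_edge exy); case: b xb; case: (x \in X).
Qed.

(* The empty set is where [has_edge] is needed: its common neighbours are
   all vertices, and one is required on a prescribed side. *)
Lemma common_nbr_on_side (A : {set T}) b :
  #|A| <= max_degree e -> {in A, forall a, (a \in X) = ~~ b} ->
  exists w, common_nbr e A w /\ (w \in X) = b.
Proof.
move=> cardA sideA.
have [-> | /set0Pn [a aA]] := eqVneq A set0.
  by have [w wb] := exists_on_side b; exists w; split => // a; rewrite inE.
have [w Aw] : exists w, common_nbr e A w.
  have [inX inY] := common_nbr_small cardA.
  by case: b sideA => sideA; [apply: inY | apply: inX];
    apply/subsetP => z zA; rewrite ?bipartition_memY sideA.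
by exists w; split => //; rewrite (bipartition_edge (Aw a aA)) (sideA a aA) negbK.
Qed.

Lemma card_imset_nbhd (h : T -> T) (D : {set T}) z :
  #|h @: (nbhd e z :&: D)| <= max_degree e.
Proof.
apply: leq_trans (leq_imset_card _ _) _.
apply: leq_trans (subset_leq_card (subsetIl _ _)) _.
exact: (leq_bigmax z).
Qed.

Lemma extend_hom_to_side D h c (b : bool) :
  hom_on e D h -> side_parity D h c ->
  let D' := D :|: [set z | (z \in X) == b] in
  exists h', [/\ hom_on e D' h', {in D, h' =1 h} & side_parity D' h' c].
Proof.
move=> homh parh D'.
have new_image z : exists wz, (z \in X) = b ->
    common_nbr e (h @: (nbhd e z :&: D)) wz /\ (wz \in X) = (b == c).
  have [zb | zb] := eqVneq (z \in X) b; last first.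
    by exists z => /eqP; rewrite (negPf zb).
  have sideN : {in h @: (nbhd e z :&: D), forall a, (a \in X) = ~~ (b == c)}.
    move=> a /imsetP [d]; rewrite !inE => /andP [ezd dD] ->.
    by rewrite parh // (bipartition_edge ezd) zb; case: (b); case: (c).
  have [wz wzP] := common_nbr_on_side (card_imset_nbhd h D z) sideN.
  by exists wz.
have [w wP] := fin_all_exists new_image.
pose h' z := if z \in D then h z else w z.
have hom_new x y : x \in D -> y \notin D -> (y \in X) = b -> e x y ->
    e (h' x) (h' y).
  move=> xD yD yb exy; rewrite /h' xD (negbTE yD).
  by apply: (wP y yb).1; apply/imsetP; exists x; rewrite // !inE e_sym exy xD.
exists h'; split; last 2 first.
- by move=> z zD; rewrite /h' zD.
- move=> z; rewrite !inE /h'; case: ifP => [zD _ | _ /eqP zb].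
    exact: parh.
  by rewrite (wP z zb).2 zb.
move=> x y; rewrite !inE.
case xD: (x \in D); case yD: (y \in D) => //= xb yb exy.
- by rewrite /h' xD yD; apply: homh.
- exact: hom_new xD (negbT yD) (eqP yb) exy.
- by rewrite e_sym; apply: hom_new yD (negbT xD) (eqP xb) _; rewrite e_sym.
by move: yb; rewrite (bipartition_edge exy) (eqP xb); case: (b).
Qed.

End Extension.
End Bipartite.

Theorem lemma5p4 (T : finType) (e : rel T) (X Y : {set T}) :
  simple_graph e -> connected_graph e -> bipartition e X Y ->
  (forall A : {set T}, #|A| <= max_degree e ->
     (A \subset X -> exists v, common_nbr e A v) /\
     (A \subset Y -> exists v, common_nbr e A v)) ->
  C_HH e.
Proof.
move=> [e_sym _] _ bip common S f connS homf.
have [/existsP [x /existsP [y exy]] | no_edge] :=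
  boolP [exists x, exists y, e x y]; last first.
  exists f; split => // x y exy; case/negP: no_edge.
  by apply/existsP; exists x; apply/existsP; exists y.
have edge : exists x y, e x y by exists x, y.
have [c parf] := connected_hom_side_parity bip connS homf.
have [h [homh hf parh]] :=
  extend_hom_to_side e_sym bip common edge true homf parf.
have [g [homg gh _]] :=
  extend_hom_to_side e_sym bip common edge false homh parh.
exists g; split; last by move=> s sS; rewrite gh ?hf // inE sS.
move=> u v euv; apply: homg => //; rewrite !inE;
  by case: (_ \in S); case: (_ \in X).
Qed.
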